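(* Let $\{a^1,\ldots,a^n\}\subseteq \mathbb{Z}^m$, let $C:=\operatorname{cone}\{a^1,\ldots,a^n\}$, and let $p$ be a prime. Then $\{a^1,\ldots,a^n\}$ is a $p$-adic generating set for a cone if, and only if, for every nonempty face $F$ of $C$, the set $\{a^i:a^i\in F\}$ is a $p$-adic generating set for a subspace.
   Context: A $p$-adic rational is a number $a/p^k$ with $a,k\in\mathbb{Z}$, $k\ge0$; a vector is $p$-adic if all entries are $p$-adic rationals. A finite set $S\subseteq\mathbb{Z}^m$ is a $p$-adic generating set for a cone if every integral vector in the conic hull of $S$ is a conic combination of the elements of $S$ with $p$-adic coefficients; it is a $p$-adic generating set for a subspace if every integral vector in the linear hull of $S$ is a linear combination of the elements of $S$ with $p$-adic coefficients. *)

From HB Require Import structures.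
From mathcomp Require Import all_boot all_order all_algebra.
From mathcomp Require Import boolp reals.
Set Implicit Arguments. Unset Strict Implicit. Unset Printing Implicit Defensive.
Import Order.TTheory GRing.Theory Num.Theory.
Local Open Scope ring_scope.

(* Vectors of Z^m are 'rV[int]_m; they are viewed in R^m = 'rV[R]_m
   (R an arbitrary realType, i.e. the real numbers). *)
Definition rvec (R : realType) (m : nat) (v : 'rV[int]_m) : 'rV[R]_m :=
  map_mx (fun z : int => z%:~R) v.

Definition dotv (R : realType) (m : nat) (w x : 'rV[R]_m) : R :=
  \sum_(j < m) w 0 j * x 0 j.

Definition padic (R : realType) (p : nat) (x : R) : Prop :=
  exists (a : int) (k : nat), x = a%:~R / (p%:R ^+ k).

Definition in_cone (R : realType) (m n : nat) (a : 'I_n -> 'rV[int]_m)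
  (x : 'rV[R]_m) : Prop :=
  exists lam : 'I_n -> R, (forall i, 0 <= lam i) /\
    x = \sum_(i < n) lam i *: rvec R (a i).

Definition is_face (R : realType) (m n : nat) (a : 'I_n -> 'rV[int]_m)
  (F : 'rV[R]_m -> Prop) : Prop :=
  exists w : 'rV[R]_m,
    (forall y, in_cone a y -> 0 <= dotv w y) /\
    (forall x, F x <-> (in_cone a x /\ dotv w x = 0)).

Definition padic_gen_cone (R : realType) (p m n : nat)
  (a : 'I_n -> 'rV[int]_m) (P : pred 'I_n) : Prop :=
  forall b : 'rV[int]_m,
    (exists lam : 'I_n -> R, (forall i, P i -> 0 <= lam i) /\
       rvec R b = \sum_(i < n | P i) lam i *: rvec R (a i)) ->
    exists mu : 'I_n -> R, (forall i, P i -> 0 <= mu i /\ padic p (mu i)) /\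
       rvec R b = \sum_(i < n | P i) mu i *: rvec R (a i).

Definition padic_gen_subspace (R : realType) (p m n : nat)
  (a : 'I_n -> 'rV[int]_m) (P : pred 'I_n) : Prop :=
  forall b : 'rV[int]_m,
    (exists lam : 'I_n -> R,
       rvec R b = \sum_(i < n | P i) lam i *: rvec R (a i)) ->
    exists mu : 'I_n -> R, (forall i, P i -> padic p (mu i)) /\
       rvec R b = \sum_(i < n | P i) mu i *: rvec R (a i).

(* Forward: an integral [b] in the span of a face [F = C ∩ w^⊥] becomes an
   integral point of [C] after adding [N] times every generator in [F]; since
   [w.b = 0], its nonnegative p-adic coefficients vanish off [F], and
   subtracting [N] again gives p-adic coefficients for [b].
   Backward: by Farkas' lemma an integral [b] of [C] lies in the relative
   interior of a face [F], i.e. [b = sum lam_i a^i] over the [a^i] in [F] with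
   all [lam_i > 0].  Small integral vectors of [span F] have p-adic coefficients
   bounded by some [B]; for [p^e lam_i > B + 1], the vector
   [p^e b - sum floor(p^e lam_i) a^i] is small, and dividing its p-adic
   representation plus [sum floor(p^e lam_i) a^i] by [p^e] gives nonnegative
   p-adic coefficients for [b]. *)

From HB Require Import structures.
From mathcomp Require Import all_boot all_order all_algebra.
From mathcomp Require Import boolp reals.
From mathcomp Require Import ring lra zify.
Import Order.TTheory GRing.Theory Num.Theory.
Local Open Scope ring_scope.
Set Implicit Arguments. Unset Strict Implicit. Unset Printing Implicit Defensive.

Section DotProduct.
Variables (R : realType) (m : nat).
Implicit Types (u w x y : 'rV[R]_m).

Lemma dotv_is_scalar w : scalar (dotv w).
Proof.
move=> t x y; rewrite /dotv mulr_sumr -big_split; apply: eq_bigr => j _.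
by rewrite !mxE /= mulrDr mulrCA.
Qed.

HB.instance Definition _ w :=
  GRing.isLinear.Build R 'rV[R]_m R _ (dotv w) (dotv_is_scalar w).

Lemma dotvC u x : dotv u x = dotv x u.
Proof. by apply: eq_bigr => j _; rewrite mulrC. Qed.

Lemma dotv0l x : dotv 0 x = 0.
Proof. by rewrite dotvC linear0. Qed.

Lemma dotvBl u w x : dotv (u - w) x = dotv u x - dotv w x.
Proof. by rewrite dotvC linearB /= !(dotvC x). Qed.

Lemma dotvZl t u x : dotv (t *: u) x = t * dotv u x.
Proof. by rewrite dotvC linearZ /= dotvC. Qed.

Lemma dotv_suml (I : Type) (r : seq I) (P : pred I) (F : I -> 'rV[R]_m) x :
  dotv (\sum_(i <- r | P i) F i) x = \sum_(i <- r | P i) dotv (F i) x.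
Proof. by rewrite dotvC linear_sum; apply: eq_bigr => i _; rewrite dotvC. Qed.

Lemma dotvv_le0 x : dotv x x <= 0 -> x = 0.
Proof.
have sqr_ge0 j : 0 <= x 0 j * x 0 j by rewrite -expr2 sqr_ge0.
move=> xx_le0; have xx0 : dotv x x = 0 by apply/eqP; rewrite eq_le xx_le0 sumr_ge0.
apply/rowP => j; rewrite mxE.
move: (@psumr_eq0P _ _ predT (fun j => x 0 j * x 0 j) (fun j _ => sqr_ge0 j) xx0 j isT).
move/eqP.
by rewrite mulf_eq0 orbb => /eqP.
Qed.

End DotProduct.

Section ConicRepresentation.
Variables (R : realType) (m n : nat) (v : 'I_n -> 'rV[R]_m).
Implicit Types (w x : 'rV[R]_m) (lam : 'I_n -> R).

Definition cone_rep x lam := (forall i, 0 <= lam i) /\ x = \sum_i lam i *: v i.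

Lemma dotv_cone_ge0 w x lam :
  cone_rep x lam -> (forall i, 0 <= dotv w (v i)) -> 0 <= dotv w x.
Proof.
move=> [lam_ge0 ->] w_ge0; rewrite linear_sum sumr_ge0 // => i _.
by rewrite linearZ /= mulr_ge0.
Qed.

Lemma cone_rep_face w x lam :
  cone_rep x lam -> (forall i, 0 <= dotv w (v i)) -> dotv w x = 0 ->
  forall i, lam i * dotv w (v i) = 0.
Proof.
move=> [lam_ge0 xE] w_ge0 wx0 i.
have terms_ge0 k : predT k -> 0 <= lam k * dotv w (v k) by rewrite mulr_ge0.
apply: (psumr_eq0P terms_ge0) => //; rewrite -[RHS]wx0 xE linear_sum.
by apply: eq_bigr => k _; rewrite linearZ /=.
Qed.

Lemma cone_rep_mean (I : finType) x (L : I -> 'I_n -> R) :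
  (0 < #|I|)%N -> (forall k, cone_rep x (L k)) ->
  cone_rep x (fun i => #|I|%:R^-1 * \sum_k L k i).
Proof.
move=> I_gt0 rep; split=> [i|].
  by rewrite mulr_ge0 ?invr_ge0 // sumr_ge0 // => k _; case: (rep k).
under eq_bigr do rewrite -scalerA scaler_suml.
rewrite -scaler_sumr exchange_big /=.
under [X in _ *: X]eq_bigr => k _ do rewrite -(proj2 (rep k)).
by rewrite sumr_const -scaler_nat scalerA mulVf ?scale1r // pnatr_eq0 -lt0n.
Qed.

End ConicRepresentation.

Lemma cone_rep_lift0 (R : realType) m n (v : 'I_n.+1 -> 'rV[R]_m) x t lam :
  0 <= t -> cone_rep (fun i => v (lift ord0 i)) (x - t *: v ord0) lam ->
  exists lam', cone_rep v x lam'.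
Proof.
move=> t_ge0 [lam_ge0 xE].
exists (fun i => if unlift ord0 i is Some j then lam j else t); split.
  by move=> i; case: unlift.
rewrite big_ord_recl unlift_none -[x](subrK (t *: v ord0)) xE addrC; congr (_ + _).
by apply: eq_bigr => i _; rewrite liftK.
Qed.

(* Farkas' lemma, by elimination of the first generator. *)
Lemma farkas (R : realType) m n (v : 'I_n -> 'rV[R]_m) c :
  (forall y, (forall i, 0 <= dotv y (v i)) -> 0 <= dotv y c) ->
  exists lam, cone_rep v c lam.
Proof.
elim: n v c => [|n IH] v c Hc.
  exists (fun=> 0); split=> //; rewrite big_ord0; apply: dotvv_le0.
  by rewrite -oppr_ge0 -linearN /= dotvC; apply: Hc => -[].
set a := v ord0; set v' := fun i => v (lift ord0 i).
have [Hc'|] := pselect (forall y, (forall i, 0 <= dotv y (v' i)) -> 0 <= dotv y c).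
  have [lam repc] := IH v' c Hc'.
  by apply: (cone_rep_lift0 (t := 0) (lam := lam) (lexx 0)); rewrite scale0r subr0.
move=> /existsNP [y /not_implyP [y_ge0 /negP]]; rewrite -ltNge => yc_lt0.
have ya_lt0 : dotv y a < 0.
  rewrite ltNge; apply/negP => ya_ge0; move: yc_lt0; rewrite ltNge Hc // => i.
  by case: (unliftP ord0 i) => [j ->|->] //; apply: y_ge0.
pose t u := dotv y u / dotv y a.
(* Projecting along [a] parallel to [y] reduces to a family of [n] generators. *)
have proj x u : dotv (x - (dotv x a / dotv y a) *: y) u = dotv x (u - t u *: a).
  by rewrite dotvBl dotvZl linearB linearZ /= /t; ring.
have [lam [lam_ge0 cE]] : exists lam,
    cone_rep (fun i => v' i - t (v' i) *: a) (c - t c *: a) lam.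
  apply: IH => x x_ge0; rewrite -proj; apply: Hc => i; rewrite proj.
  case: (unliftP ord0 i) => [j ->|->]; first exact: x_ge0.
  by rewrite /t divff ?scale1r ?subrr ?linear0 // lt_eqF.
apply: (cone_rep_lift0 (t := t c - \sum_i lam i * t (v' i)) (lam := lam)).
  have -> : \sum_i lam i * t (v' i) = (\sum_i lam i * dotv y (v' i)) / dotv y a.
    by rewrite mulr_suml; apply: eq_bigr => i _; rewrite mulrA.
  rewrite /t -mulrBl mulr_le0 ?invr_le0 ?ltW // subr_lt0.
  by rewrite (lt_le_trans yc_lt0) // sumr_ge0 // => i _; rewrite mulr_ge0 ?y_ge0.
split=> //; rewrite scalerBl opprB [_ - t c *: a]addrC addrA cE.
rewrite scaler_suml -big_split /=; apply: eq_bigr => i _.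
by rewrite scalerBr scalerA subrK.
Qed.

Section ConeSeparation.
Variables (R : realType) (m n : nat) (v : 'I_n -> 'rV[R]_m).
Implicit Types (x : 'rV[R]_m) (lam : 'I_n -> R).

Lemma cone_rep_pos_coef x l0 j t lam :
  cone_rep v x l0 -> 0 <= t -> (forall i, 0 <= lam i) ->
  v j + \sum_i lam i *: v i = t *: x -> exists2 l, cone_rep v x l & 0 < l j.
Proof.
move=> [l0_ge0 xE] t_ge0 lam_ge0 vjE.
pose s := t + 1; have s_gt0 : 0 < s by rewrite ltr_wpDl.
exists (fun i => (l0 i + lam i + (i == j)%:R) / s); last first.
  by rewrite eqxx divr_gt0 // ltr_wpDl ?addr_ge0.
split=> [i|]; first by rewrite divr_ge0 ?addr_ge0 ?ler0n ?(ltW s_gt0).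
have delta : \sum_i (i == j)%:R *: v i = v j.
  by rewrite (bigD1 j) //= eqxx scale1r big1 ?addr0 // => i /negPf ->; rewrite scale0r.
under eq_bigr do rewrite mulrC -scalerA !scalerDl.
rewrite -scaler_sumr !big_split /= -xE delta -addrA [_ + v j]addrC vjE.
by rewrite -{2}[x]scale1r -scalerDl addrC scalerA mulVf ?scale1r ?gt_eqF.
Qed.

Lemma cone_rep_separation x l0 j :
  cone_rep v x l0 -> ~ (exists2 l, cone_rep v x l & 0 < l j) ->
  exists w, [/\ forall i, 0 <= dotv w (v i), dotv w x = 0 & 0 < dotv w (v j)].
Proof.
move=> rep0 no_rep.
(* Either [- v j] lies in the cone of the [v i] and [- x], which yields a
   representation of [x] using [v j], or a functional separates them. *)
pose u i := if unlift ord0 i is Some k then v k else - x.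
have [Hfar|] := pselect (forall y, (forall i, 0 <= dotv y (u i)) -> 0 <= dotv y (- v j)).
  have [lam [lam_ge0 vjE]] := farkas Hfar.
  case: no_rep; pose lam' i := lam (lift ord0 i).
  apply: (cone_rep_pos_coef (lam := lam') rep0 (lam_ge0 ord0)) => [i|]; first exact: lam_ge0.
  move: vjE; rewrite big_ord_recl /u unlift_none scalerN => /eqP.
  rewrite eqr_oppLR opprD opprK -subr_eq opprK => /eqP <-; congr (_ + _).
  by apply: eq_bigr => i _; rewrite liftK.
move=> /existsNP [y /not_implyP [y_ge0 /negP]].
rewrite -ltNge linearN oppr_lt0 => yvj_gt0.
have yv_ge0 i : 0 <= dotv y (v i) by have := y_ge0 (lift ord0 i); rewrite /u liftK.
exists y; split=> //; apply/eqP; rewrite eq_le (dotv_cone_ge0 rep0) ?andbT //.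
by have := y_ge0 ord0; rewrite /u unlift_none linearN oppr_ge0.
Qed.

(* Every point of the cone lies in the relative interior of some face. *)
Lemma cone_rep_supporting_face x l0 :
  cone_rep v x l0 -> exists w lam, [/\ cone_rep v x lam, forall i, 0 <= dotv w (v i)
    & forall i, (0 < lam i) = (dotv w (v i) == 0)].
Proof.
move=> rep0.
have witness j : exists p : ('I_n -> R) * 'rV[R]_m, [/\ cone_rep v x p.1,
    forall i, 0 <= dotv p.2 (v i), dotv p.2 x = 0 & 0 < p.1 j \/ 0 < dotv p.2 (v j)].
  have [[l repl lj_gt0]|no_rep] := pselect (exists2 l, cone_rep v x l & 0 < l j).
    by exists (l, 0); split; [|move=> i; rewrite dotv0l|rewrite dotv0l|left].
  have [w [w_ge0 wx0 wj_gt0]] := cone_rep_separation rep0 no_rep.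
  by exists (l0, w); split=> //; right.
(* Average the representations and add up the functionals. *)
have [f fP] := fin_all_exists witness.
pose L k := if k is Some j then (f j).1 else l0.
pose w := \sum_j (f j).2.
pose lam i := #|{: option 'I_n}|%:R^-1 * \sum_k L k i.
have repL : cone_rep v x lam.
  by apply: cone_rep_mean => [|[j|]] //; [rewrite card_option | case: (fP j)].
have w_ge0 i : 0 <= dotv w (v i).
  by rewrite dotv_suml sumr_ge0 // => j _; case: (fP j).
have wx0 : dotv w x = 0 by rewrite dotv_suml big1 // => j _; case: (fP j).
exists w, lam; split=> // i; apply/idP/eqP => [lam_gt0|wvi0].
  by have /eqP := cone_rep_face repL w_ge0 wx0 i; rewrite mulf_eq0 gt_eqF //= => /eqP.
have fi_terms_ge0 j : predT j -> 0 <= dotv (f j).2 (v i) by case: (fP j).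
have /eqP fvi0 :=
  psumr_eq0P fi_terms_ge0 (etrans (esym (dotv_suml _ _ _ _)) wvi0) (isT : predT i).
have [_ _ _ [fi_gt0|]] := fP i; last by rewrite (eqP fvi0) ltxx.
apply: mulr_gt0; first by rewrite invr_gt0 ltr0n card_option.
rewrite (bigD1 (Some i)) //= ltr_pwDl // sumr_ge0 //.
move=> [k|] _ /=; last by case: rep0 => l0_ge0 _; apply: l0_ge0.
by case: (fP k) => -[fk_ge0 _] *; apply: fk_ge0.
Qed.

End ConeSeparation.

Section IntegerVectors.
Variables (R : realType) (m : nat).
Implicit Types u w : 'rV[int]_m.

Lemma rvecD u w : rvec R (u + w) = rvec R u + rvec R w.
Proof. exact: map_mxD. Qed.

Lemma rvecB u w : rvec R (u - w) = rvec R u - rvec R w.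
Proof. exact: map_mxB. Qed.

Lemma rvecZ (z : int) u : rvec R (z *: u) = z%:~R *: rvec R u.
Proof. exact: map_mxZ. Qed.

Lemma rvec_sum (I : Type) (r : seq I) (P : pred I) (F : I -> 'rV[int]_m) :
  rvec R (\sum_(i <- r | P i) F i) = \sum_(i <- r | P i) rvec R (F i).
Proof. exact: map_mx_sum. Qed.

End IntegerVectors.

Section PAdicRationals.
Variables (R : realType) (p : nat).

Lemma padic_int (z : int) : padic p (z%:~R : R).
Proof. by exists z, 0%N; rewrite expr0 divr1. Qed.

Lemma padicN (x : R) : padic p x -> padic p (- x).
Proof. by move=> [z [k ->]]; exists (- z), k; rewrite intrN mulNr. Qed.

Lemma padicD (x y : R) : (0 < p)%N -> padic p x -> padic p y -> padic p (x + y).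
Proof.
move=> p_gt0 [z [k ->]] [z' [k' ->]].
have pX_neq0 l : (p%:R : R) ^+ l != 0 by rewrite expf_neq0 // pnatr_eq0 -lt0n.
exists (z * p%:Z ^+ k' + z' * p%:Z ^+ k), (k + k')%N.
by rewrite intrD !intrM !rmorphXn /= exprD; field; rewrite !pX_neq0.
Qed.

Lemma padic_divX (x : R) e : padic p x -> padic p (x / p%:R ^+ e).
Proof. by move=> [z [k ->]]; exists z, (k + e)%N; rewrite exprD invfM mulrA. Qed.

End PAdicRationals.

Lemma exists_expn_gt (R : archiFieldType) (p : nat) (I : finType) (P : pred I)
    (lam : I -> R) (c : R) :
  (1 < p)%N -> (forall i, P i -> 0 < lam i) ->
  exists e : nat, forall i, P i -> c < (p ^ e)%:R * lam i.
Proof.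
move=> p_gt1 lam_gt0.
pose X := \sum_(i | P i) `|c| / lam i.
have X_ge0 : 0 <= X.
  by rewrite sumr_ge0 // => i Pi; rewrite divr_ge0 ?(ltW (lam_gt0 _ Pi)).
exists (Num.bound X) => i Pi; have lami_gt0 := lam_gt0 i Pi.
rewrite (le_lt_trans (ler_norm c)) // -ltr_pdivrMr //.
apply: le_lt_trans (lt_le_trans (archi_boundP X_ge0) _).
  rewrite /X (bigD1 i) //= lerDl sumr_ge0 // => k /andP[Pk _].
  by rewrite divr_ge0 ?(ltW (lam_gt0 _ Pk)).
by rewrite ler_nat ltnW // ltn_expl.
Qed.

Section IntegerGenerators.
Variables (R : realType) (m n : nat) (a : 'I_n -> 'rV[int]_m).

Lemma in_cone_generator i : in_cone a (rvec R (a i)).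
Proof.
exists (fun j => (j == i)%:R); split=> [j|]; first by rewrite ler0n.
rewrite (bigD1 i) //= eqxx scale1r big1 ?addr0 // => j /negPf ->.
by rewrite scale0r.
Qed.

Lemma face_generatorE (F : 'rV[R]_m -> Prop) w :
  (forall x, F x <-> in_cone a x /\ dotv w x = 0) ->
  forall i, `[< F (rvec R (a i)) >] = (dotv w (rvec R (a i)) == 0).
Proof.
move=> FE i; apply/asboolP/eqP => [/FE [] //|wai0].
by apply/FE; split=> //; apply: in_cone_generator.
Qed.

Lemma padic_gen_subspace_face p F : (0 < p)%N ->
  padic_gen_cone R p a predT -> is_face a F ->
  padic_gen_subspace R p a (fun i => `[< F (rvec R (a i)) >]).
Proof.
move=> p_gt0 cone_gen [w [w_cone_ge0 FE]] b [lam bE].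
set T := (fun i => `[< F (rvec R (a i)) >]) in bE *.
have TE i : T i = (dotv w (rvec R (a i)) == 0) := face_generatorE FE i.
have w_ge0 i : 0 <= dotv w (rvec R (a i)) by apply/w_cone_ge0/in_cone_generator.
have [N lamN_ge0] : exists N : nat, forall i, 0 <= lam i + N%:R.
  exists (Num.bound (\sum_i `|lam i|)) => i.
  have /archi_boundP : 0 <= \sum_i `|lam i| by rewrite sumr_ge0.
  have : `|lam i| <= \sum_i `|lam i| by rewrite (bigD1 i) //= lerDl sumr_ge0.
  by have := ler_norm (- lam i); rewrite normrN; lra.
(* Shift [b] into the cone by adding [N] times every generator of the face. *)
pose b_up := b + N%:Z *: \sum_(i | T i) a i.
pose lam_up i := if T i then lam i + N%:R else 0.
have b_upE : rvec R b_up = \sum_i lam_up i *: rvec R (a i).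
  rewrite rvecD rvecZ rvec_sum bE scaler_sumr -big_split big_mkcond /=.
  by apply: eq_bigr => i _; rewrite /lam_up /T; case: asboolP; rewrite ?scalerDl ?scale0r.
have [|mu [mu_ok b_up_mu]] := cone_gen b_up.
  by exists lam_up; split=> // i _; rewrite /lam_up; case: ifP.
have mu_face : forall i, ~~ T i -> mu i = 0.
  have wb_up0 : dotv w (rvec R b_up) = 0.
    rewrite b_upE linear_sum big1 // => i _; rewrite linearZ /= /lam_up.
    by case: ifP => [|_]; rewrite ?mul0r // TE => /eqP ->; rewrite mulr0.
  have mu_rep : cone_rep (fun i => rvec R (a i)) (rvec R b_up) mu.
    by split=> // i; case: (mu_ok i isT).
  move=> i Ti; have := cone_rep_face mu_rep w_ge0 wb_up0 i.
  by move/eqP; rewrite mulf_eq0 -TE (negPf Ti) orbF => /eqP.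
exists (fun i => mu i - N%:R); split=> [i _|].
  rewrite pmulrn; apply: padicD p_gt0 _ (padicN (padic_int _ _ _)).
  by case: (mu_ok i isT).
rewrite [LHS](_ : _ = rvec R b_up - N%:R *: \sum_(i | T i) rvec R (a i)); last first.
  by rewrite rvecD rvecZ rvec_sum pmulrn addrK.
rewrite b_up_mu scaler_sumr (bigID T) /= [X in _ + X - _]big1 => [|i Ti]; last first.
  by rewrite mu_face // scale0r.
by rewrite addr0 -sumrB; apply: eq_bigr => i _; rewrite scalerBl.
Qed.

Lemma padic_gen_subspace_bounded_seq p T (s : seq 'rV[int]_m) :
  padic_gen_subspace R p a T ->
  exists B : R, forall r, r \in s ->
    (exists lam : 'I_n -> R, rvec R r = \sum_(i | T i) lam i *: rvec R (a i)) ->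
  exists2 mu : 'I_n -> R, forall i, T i -> padic p (mu i) /\ `|mu i| <= B
    & rvec R r = \sum_(i | T i) mu i *: rvec R (a i).
Proof.
move=> sub; elim: s => [|r0 s [B HB]]; first by exists 0.
have [span0|not_span0] := pselect (exists lam : 'I_n -> R,
    rvec R r0 = \sum_(i | T i) lam i *: rvec R (a i)); last first.
  by exists B => r; rewrite in_cons => /predU1P [-> /not_span0|/HB].
have [mu0 [mu0_padic r0E]] := sub r0 span0.
exists (Num.max B (\sum_i `|mu0 i|)) => r; rewrite in_cons.
case/predU1P => [-> _|r_s /(HB r r_s) [mu mu_ok rE]].
  exists mu0 => // i Ti; split; first exact: mu0_padic.
  by rewrite le_max (bigD1 i) //= lerDl sumr_ge0 ?orbT.
by exists mu => // i Ti; have [? muB] := mu_ok i Ti; rewrite le_max muB.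
Qed.

Lemma padic_gen_subspace_bounded p T (K : nat) :
  padic_gen_subspace R p a T ->
  exists B : R, forall r : 'rV[int]_m, (forall j, `|r ord0 j| <= K)%N ->
    (exists lam : 'I_n -> R, rvec R r = \sum_(i | T i) lam i *: rvec R (a i)) ->
  exists2 mu : 'I_n -> R, forall i, T i -> padic p (mu i) /\ `|mu i| <= B
    & rvec R r = \sum_(i | T i) mu i *: rvec R (a i).
Proof.
pose box := [seq \row_j ((f j)%:Z - K%:Z) | f : {ffun 'I_m -> 'I_(K.*2.+1)}].
move=> /(padic_gen_subspace_bounded_seq box) [B HB]; exists B => r r_le; apply: HB.
apply/imageP; exists [ffun j => inord `|r ord0 j + K%:Z|] => //.
apply/rowP => j; have := r_le j; rewrite !mxE ffunE inordK -[r 0 j]/(r ord0 j); first lia.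
by have := r_le j; rewrite -addnn; lia.
Qed.

Lemma int_comb_coord_bound (T : pred 'I_n) (th : 'I_n -> R) (r : 'rV[int]_m) :
  (forall i, T i -> 0 <= th i <= 1) ->
  rvec R r = \sum_(i | T i) th i *: rvec R (a i) ->
  forall j, (`|r ord0 j| <= \sum_i \sum_k `|a i ord0 k|)%N.
Proof.
move=> th_01 rE j; rewrite -(ler_nat R) natr_absz intr_norm natr_sum.
have -> : ((r ord0 j)%:~R : R) = rvec R r ord0 j by rewrite mxE.
rewrite rE summxE (le_trans (ler_norm_sum _ _ _)) //.
apply: le_trans (_ : \sum_(i | T i) `|((a i ord0 j)%:~R : R)| <= _).
  apply: ler_sum => i Ti; rewrite !mxE normrM; have /andP [th_ge0 th_le1] := th_01 i Ti.
  by rewrite ler_piMl // ger0_norm.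
rewrite [leLHS]big_mkcond ler_sum // => i _.
rewrite natr_sum (bigD1 j) //= natr_absz intr_norm.
by case: (T i); rewrite ?lerDl ?sumr_ge0 // addr_ge0 ?sumr_ge0.
Qed.

(* Round [p^e * lam] down to integers; the integral remainder is a small
   vector of the span, whose bounded p-adic coefficients cannot spoil
   positivity once [p^e * lam] is large. *)
Lemma padic_gen_subspace_pos_comb p T b (lam : 'I_n -> R) :
  prime p -> padic_gen_subspace R p a T -> (forall i, T i -> 0 < lam i) ->
  rvec R b = \sum_(i | T i) lam i *: rvec R (a i) ->
  exists2 mu : 'I_n -> R, forall i, T i -> 0 <= mu i /\ padic p (mu i)
    & rvec R b = \sum_(i | T i) mu i *: rvec R (a i).
Proof.
move=> p_prime sub lam_gt0 bE.
have [B HB] := padic_gen_subspace_bounded (\sum_i \sum_k `|a i ord0 k|)%N sub.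
have [e Nlam_gt] := exists_expn_gt (1 + B) (prime_gt1 p_prime) lam_gt0.
set N : R := (p ^ e)%:R in Nlam_gt.
have N_gt0 : 0 < N by rewrite ltr0n expn_gt0 prime_gt0.
pose fl i := Num.floor (N * lam i).
have fl_le i : (fl i)%:~R <= N * lam i := floor_le _.
have fl_gt i : N * lam i - 1 < (fl i)%:~R.
  by have := floorD1_gt (N * lam i); rewrite intrD; lra.
pose r := (p ^ e)%:Z *: b - \sum_(i | T i) fl i *: a i.
have rE : rvec R r = \sum_(i | T i) (N * lam i - (fl i)%:~R) *: rvec R (a i).
  rewrite rvecB rvecZ rvec_sum bE scaler_sumr -sumrB -pmulrn.
  by apply: eq_bigr => i _; rewrite rvecZ scalerA scalerBl.
have [|mu mu_ok rmu] := HB r _ (ex_intro _ _ rE).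
  apply: int_comb_coord_bound rE => i _.
  by have := fl_le i; have := fl_gt i; rewrite subr_ge0 lerBlDr; lra.
exists (fun i => ((fl i)%:~R + mu i) / N) => [i Ti|].
  have [mu_padic] := mu_ok i Ti; rewrite ler_norml => /andP [muB _].
  split; first by rewrite divr_ge0 ?ltW //; have := fl_gt i; have := Nlam_gt i Ti; lra.
  by rewrite /N natrX; apply/padic_divX/(padicD (prime_gt0 p_prime) (padic_int _ _ _)).
apply: (scalerI (lt0r_neq0 N_gt0)); rewrite scaler_sumr.
have -> : N *: rvec R b = rvec R r + \sum_(i | T i) (fl i)%:~R *: rvec R (a i).
  rewrite rvecB rvecZ rvec_sum -pmulrn; under eq_bigr do rewrite rvecZ.
  by rewrite subrK.
rewrite rmu -big_split; apply: eq_bigr => i _.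
by rewrite scalerA mulrC divfK ?lt0r_neq0 // scalerDl addrC.
Qed.

End IntegerGenerators.

Theorem theorem1p2 (R : realType) (m n p : nat) (a : 'I_n -> 'rV[int]_m) :
  prime p ->
  (padic_gen_cone R p a predT <->
   (forall F : 'rV[R]_m -> Prop, is_face a F -> (exists x, F x) ->
      padic_gen_subspace R p a
        (fun i => `[< F (rvec R (a i)) >]))).
Proof.
move=> p_prime; split=> [cone_gen F F_face _|faces_gen b [lam0 [lam0_ge0 bE]]].
  exact: padic_gen_subspace_face (prime_gt0 p_prime) cone_gen F_face.
have rep0 : cone_rep (fun i => rvec R (a i)) (rvec R b) lam0.
  by split=> // i; apply: lam0_ge0.
have [w [lam [[lam_ge0 blam] w_ge0 lam_face]]] := cone_rep_supporting_face rep0.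
pose F y := in_cone a y /\ dotv w y = 0.
have F_face : is_face a F.
  by exists w; split=> // y [l repl]; apply: dotv_cone_ge0 repl w_ge0.
have F0 : F 0.
  split; last by rewrite linear0.
  by exists (fun=> 0); split=> //; rewrite big1 // => i _; rewrite scale0r.
have TE i : `[< F (rvec R (a i)) >] = (0 < lam i).
  by rewrite lam_face; apply: face_generatorE (fun x => iff_refl (F x)) i.
have [||mu mu_ok bmu] := padic_gen_subspace_pos_comb (b := b) (lam := lam) p_prime
  (faces_gen F F_face (ex_intro _ 0 F0)).
- by move=> i; rewrite TE.
- rewrite blam [RHS]big_mkcond; apply: eq_bigr => i _; rewrite TE.
  by case: (ltrgt0P (lam i)) (lam_ge0 i) => [||->] //; rewrite scale0r.
exists (fun i => if 0 < lam i then mu i else 0); split.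
  move=> i _; case: ifP => [lam_gt0|_]; first by apply: mu_ok; rewrite TE.
  by split=> //; apply: (padic_int _ _ 0).
rewrite bmu big_mkcond /=; apply: eq_bigr => i _; rewrite TE.
by case: ifP; rewrite ?scale0r.
Qed.
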